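(* Let $N$ be a positive integer and let $1\le r<s\le N$ be integers. Then there exists $n_0$ such that $\widehat{T}_{r,N}(n)\ge \widehat{T}_{s,N}(n)$ for all integers $n\ge n_0$.
   Context: A partition $\lambda=(\lambda_0,\dots,\lambda_k)$ is a non-increasing finite sequence of positive integers, with size $|\lambda|=\sum_j\lambda_j$. For positive integers $r,N$, let $T_{r,N}(\lambda)$ be the number of indices $j$ with $\lambda_j\equiv r\pmod N$ (parts counted with multiplicity), and for a positive integer $n$ let $\widehat{T}_{r,N}(n)=\sum_{|\lambda|=n}T_{r,N}(\lambda)$, the sum over all partitions of $n$. *)

From mathcomp Require Import all_boot.
Set Implicit Arguments. Unset Strict Implicit. Unset Printing Implicit Defensive.

Definition is_partition (n : nat) (s : seq nat) : bool :=
  [&& sorted geq s, all (fun x => 0 < x) s & sumn s == n].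

Definition T (r N : nat) (s : seq nat) : nat :=
  count (fun x => x == r %[mod N]) s.

Fixpoint all_seqs (k b : nat) : seq (seq nat) :=
  if k is k'.+1 then
    [seq x :: t | x <- iota 0 b.+1, t <- all_seqs k' b]
  else [:: [::]].

(* Candidate lists for partitions of n: every partition of n has at most n
   parts, each at most n. *)
Definition cand_seqs (n : nat) : seq (seq nat) :=
  flatten [seq all_seqs k n | k <- iota 0 n.+1].

Definition partitions (n : nat) : seq (seq nat) :=
  [seq s <- cand_seqs n | is_partition n s].

Definition That (r N n : nat) : nat := \sum_(s <- partitions n) T r N s.

From mathcomp Require Import all_boot zify.

Set Implicit Arguments.
Unset Strict Implicit.
Unset Printing Implicit Defensive.

(* The inequality holds for every n.  Count \hat T_{P}(n) as the number of
   marked partitions (lambda, v, j): v is a part of lambda satisfying P and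
   1 <= j <= m_v(lambda).  With d = s - r, every part v = s (mod N) exceeds d
   and v - d = r (mod N).  Trading j copies of a part v for j copies of v - d
   and j * d parts equal to 1 keeps the size, and the multiplicities of the
   original partition can be read back from those of the new one, so
   (lambda, v, j) |-> (lambda', v - d, j) injects the marked partitions for s
   into those for r. *)

Lemma flatten_map_uniq (A B : eqType) (f : A -> seq B) (s : seq A) :
  uniq s -> (forall x, uniq (f x)) ->
  (forall x y z, z \in f x -> z \in f y -> x = y) ->
  uniq (flatten (map f s)).
Proof.
move=> s_uniq f_uniq f_disj; elim: s s_uniq => //= x s IHs /andP[xNs s_uniq].
rewrite cat_uniq f_uniq IHs // andbT; apply/hasP => -[z /flatten_mapP[y ys zy] zx].
by move: xNs; rewrite (f_disj _ _ _ zx zy) ys.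
Qed.

Lemma sumn_count_undup (T : eqType) (t : seq T) :
  sumn [seq count_mem x t | x <- undup t] = size t.
Proof.
rewrite -(perm_size (perm_count_undup t)) size_flatten /shape -map_comp.
by congr sumn; apply: eq_map => x /=; rewrite size_nseq.
Qed.

Lemma mem_all_seqs k b t :
  (t \in all_seqs k b) = (size t == k) && all (fun x => x <= b) t.
Proof.
elim: k t => [|k IHk] t; first by case: t.
apply/(allpairsPdep (f := fun x u => x :: u))/idP => [[x [u [+ + ->]]]|].
  by rewrite mem_iota -/(all_seqs k b) IHk /= eqSS => xb /andP[-> ->]; rewrite andbT; lia.
case: t => // x u /andP[uk /andP[xb ub]].
by exists x, u; rewrite mem_iota -/(all_seqs k b) IHk -eqSS uk; split=> //; lia.
Qed.

Lemma all_seqs_uniq k b : uniq (all_seqs k b).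
Proof.
elim: k => // k IHk; apply: flatten_map_uniq; first exact: iota_uniq.
  by move=> x; rewrite map_inj_uniq // => u w [].
by move=> x y z /mapP[u _ ->] /mapP[w _ []].
Qed.

Lemma partitions_uniq n : uniq (partitions n).
Proof.
apply/filter_uniq/flatten_map_uniq; first exact: iota_uniq.
  by move=> k; apply: all_seqs_uniq.
by move=> k k' t; rewrite !mem_all_seqs => /andP[/eqP <- _] /andP[/eqP <-].
Qed.

Lemma size_le_sumn (l : seq nat) : all (fun x => 0 < x) l -> size l <= sumn l.
Proof. by elim: l => //= x l IHl /andP[x_gt0 /IHl]; lia. Qed.

Lemma all_le_sumn (l : seq nat) : all (fun x => x <= sumn l) l.
Proof.
elim: l => //= x l IHl; rewrite leq_addr /=.
by apply/allP => y /(allP IHl); lia.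
Qed.

Lemma mem_partitions n l : (l \in partitions n) = is_partition n l.
Proof.
rewrite mem_filter andb_idr // => /and3P[_ l_pos /eqP <-].
apply/flatten_mapP; exists (size l); first by rewrite mem_iota ltnS size_le_sumn.
by rewrite mem_all_seqs eqxx all_le_sumn.
Qed.

Definition marks (P : pred nat) (l : seq nat) : seq (nat * nat) :=
  [seq (v, j) | v <- undup (filter P l), j <- iota 1 (count_mem v l)].

Definition marked_partitions (P : pred nat) (n : nat) : seq (seq nat * (nat * nat)) :=
  [seq (l, m) | l <- partitions n, m <- marks P l].

Lemma size_marks P l : size (marks P l) = count P l.
Proof.
rewrite size_allpairs_dep -size_filter -sumn_count_undup; congr sumn.
apply/eq_in_map => v; rewrite mem_undup mem_filter size_iota => /andP[Pv _].
by rewrite count_filter; apply: eq_count => x /=; case: eqP => // ->.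
Qed.

Lemma mem_marks P l v j :
  ((v, j) \in marks P l) = [&& P v, v \in l & 0 < j <= count_mem v l].
Proof.
apply/allpairsPdep/idP => [[v' [j' [+ + [-> ->]]]]|/and3P[Pv vl jc]].
  by rewrite mem_undup mem_filter mem_iota => /andP[-> ->] /=; lia.
by exists v, j; rewrite mem_undup mem_filter mem_iota Pv vl; split=> //; lia.
Qed.

Lemma marks_uniq P l : uniq (marks P l).
Proof.
apply: flatten_map_uniq; first exact: undup_uniq.
  by move=> v; rewrite map_inj_uniq ?iota_uniq // => j j' [].
by move=> v v' m /mapP[j _ ->] /mapP[j' _ []].
Qed.

Lemma size_marked_partitions r N n :
  size (marked_partitions (fun x => x == r %[mod N]) n) = That r N n.
Proof.
rewrite size_allpairs_dep sumnE big_map.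
by apply: eq_bigr => l _; rewrite size_marks.
Qed.

Lemma mem_marked_partitions P n l v j :
  ((l, (v, j)) \in marked_partitions P n) =
  is_partition n l && ((v, j) \in marks P l).
Proof.
rewrite -mem_partitions; apply/allpairsPdep/andP => [[l' [m [? ? [-> ->]]]]|[? ?]] //.
by exists l, (v, j).
Qed.

Lemma marked_partitions_uniq P n : uniq (marked_partitions P n).
Proof.
apply: flatten_map_uniq; first exact: partitions_uniq.
  by move=> l; rewrite map_inj_uniq ?marks_uniq // => m m' [].
by move=> l l' t /mapP[m _ ->] /mapP[m' _ []].
Qed.

Section Trade.

Variable d : nat.

Definition trade (l : seq nat) (v j : nat) : seq nat :=
  sort geq (nseq j (v - d) ++ nseq (j * d) 1 ++ filter (predC1 v) l
            ++ nseq (count_mem v l - j) v).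

Lemma count_trade l v j x : j <= count_mem v l ->
  count_mem x (trade l v j) + (v == x) * j =
  count_mem x l + (v - d == x) * j + (1 == x) * (j * d).
Proof.
have [<-|vx] := eqVneq v x;
  rewrite /trade count_sort !count_cat !count_nseq count_filter /=;
  set c := count_mem v l => jc.
  rewrite (@eq_count _ (predI _ _) pred0) ?count_pred0 => [|y /=]; last by case: eqP.
  by rewrite eqxx; lia.
rewrite (@eq_count _ (predI _ _) (pred1 x)) => [|y /=]; last first.
  by case: eqVneq => // ->; rewrite eq_sym.
by move: vx; case: eqP => //= _ _; lia.
Qed.

Lemma trade_count_ge l v j : j <= count_mem v l -> j <= count_mem (v - d) (trade l v j).
Proof.
move=> jc; have := count_trade (v - d) jc; rewrite eqxx.
by case: eqP => [<-|_]; nia.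
Qed.

Lemma sumn_trade l v j : j <= count_mem v l -> d <= v -> sumn (trade l v j) = sumn l.
Proof.
move=> jc dv; rewrite (perm_sumn (permEl (perm_sort _ _))) !sumn_cat !sumn_nseq.
have -> : sumn l = sumn (filter (predC1 v) l) + v * count_mem v l.
  elim: l {jc} => [|x l /= ->]; first by rewrite muln0.
  by case: eqVneq => [->|_] /=; nia.
nia.
Qed.

Lemma trade_partition n l v j :
  is_partition n l -> j <= count_mem v l -> d < v -> is_partition n (trade l v j).
Proof.
case/and3P=> _ l_pos /eqP l_sum jc dv.
rewrite /is_partition sort_sorted /=; last by move=> a b; exact: leq_total.
rewrite sumn_trade ?l_sum ?eqxx ?andbT //; last exact: ltnW.
apply/allP => x; rewrite mem_sort !mem_cat => /or4P[/nseqP[-> _]|/nseqP[-> _]||/nseqP[-> _]] //.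
- by rewrite subn_gt0.
- by rewrite mem_filter => /andP[_ /(allP l_pos)].
- exact: leq_ltn_trans (leq0n d) dv.
Qed.

Lemma trade_inj l1 l2 v j :
  sorted geq l1 -> sorted geq l2 -> j <= count_mem v l1 -> j <= count_mem v l2 ->
  trade l1 v j = trade l2 v j -> l1 = l2.
Proof.
move=> l1_sorted l2_sorted jc1 jc2 eq_trade.
apply: (sorted_eq (rev_trans leq_trans)) => //.
  by move=> x y /andP[yx xy]; apply/eqP; rewrite eqn_leq xy.
apply/allP => x _; apply/eqP.
by have := count_trade x jc1; rewrite eq_trade count_trade // => /eqP; rewrite !eqn_add2r => /eqP.
Qed.

End Trade.

Lemma marked_partitions_size_le (P Q : pred nat) d n :
  (forall v, 0 < v -> P v -> d < v /\ Q (v - d)) ->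
  size (marked_partitions P n) <= size (marked_partitions Q n).
Proof.
move=> PQ.
have marked_P l v j : (l, (v, j)) \in marked_partitions P n ->
    [/\ is_partition n l, 0 < j <= count_mem v l, d < v & Q (v - d)].
  rewrite mem_marked_partitions mem_marks => /andP[l_part /and3P[Pv vl jc]].
  have v_gt0 : 0 < v by case/and3P: l_part => _ /allP/(_ v vl).
  by have [dv Qv] := PQ v v_gt0 Pv.
pose f (t : seq nat * (nat * nat)) := (trade d t.1 t.2.1 t.2.2, (t.2.1 - d, t.2.2)).
rewrite -(size_map f); apply: uniq_leq_size.
  rewrite map_inj_in_uniq ?marked_partitions_uniq // => -[l1 [v1 j]] [l2 [v2 j']].
  move=> /marked_P[/and3P[l1_sorted _ _] /andP[_ jc1] dv1 _].
  move=> /marked_P[/and3P[l2_sorted _ _] /andP[_ jc2] dv2 _] /= [eq_trade eq_v eq_j]; subst j'.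
  have {eq_v dv2} eq_v12 : v1 = v2 by lia.
  subst v2.
  by rewrite (trade_inj l1_sorted l2_sorted jc1 jc2 eq_trade).
move=> _ /mapP[[l [v j]] /marked_P[l_part /andP[j_gt0 jc] dv Qv] ->] /=.
have jc' := trade_count_ge d jc.
rewrite mem_marked_partitions mem_marks trade_partition // Qv j_gt0 jc' andbT /=.
by rewrite -has_pred1 has_count (leq_trans j_gt0 jc').
Qed.

Lemma leq_of_eqn_mod N s v : 0 < v -> 0 < s <= N -> v = s %[mod N] -> s <= v.
Proof.
move=> v_gt0 /andP[s_gt0]; rewrite leq_eqVlt => /orP[/eqP sN|sN] vs.
  have N_dvd_v : N %| v by rewrite /dvdn vs -sN modnn.
  by rewrite sN dvdn_leq.
by rewrite -(modn_small sN) -vs leq_mod.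
Qed.

Theorem mainTheorem2 (N r s : nat) :
  0 < N -> 1 <= r -> r < s -> s <= N ->
  exists n0 : nat, forall n : nat, n0 <= n -> That s N n <= That r N n.
Proof.
move=> _ r_gt0 rs sN; exists 0 => n _.
rewrite -!size_marked_partitions; apply: (@marked_partitions_size_le _ _ (s - r)).
move=> v v_gt0 /eqP vs; have sv : s <= v by apply: leq_of_eqn_mod vs; lia.
split; first lia.
by rewrite -(eqn_modDr (s - r)) subnK ?subnKC ?vs //; lia.
Qed.
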